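(* Let $\mathcal{L}=(L,\wedge,\vee,0,1)$ be a complete lattice. If $p\in L$ is strongly irreducible in $L$, then $p$ is weakly $\wedge$-distributive in $L$.
   Context: $p$ is strongly irreducible if for all $a,b\in L$: $a\wedge b\leq p$ implies $a\leq p$ or $b\leq p$. $p$ is weakly $\wedge$-distributive if whenever $x,y\in L$ satisfy $x\wedge y=0$, one has $p=(x\vee p)\wedge(y\vee p)$. *)

From mathcomp Require Import all_boot all_order.
Set Implicit Arguments. Unset Strict Implicit. Unset Printing Implicit Defensive.
Import Order.TTheory.
Local Open Scope order_scope.

Definition complete_lattice {d} (L : tbLatticeType d) : Prop :=
  forall A : L -> Prop, exists s : L,
    (forall a, A a -> a <= s) /\ (forall u, (forall a, A a -> a <= u) -> s <= u).

Definition strongly_irreducible {d} (L : tbLatticeType d) (p : L) : Prop :=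
  forall a b : L, a `&` b <= p -> a <= p \/ b <= p.

Definition weakly_meet_distributive {d} (L : tbLatticeType d) (p : L) : Prop :=
  forall x y : L, x `&` y = \bot -> p = (x `|` p) `&` (y `|` p).

From mathcomp Require Import all_boot all_order.
Import Order.TTheory.
Local Open Scope order_scope.

(* Since x `&` y = 0 <= p, strong irreducibility puts x or y below p; then that
   join collapses to p, and p is below the other one. *)

Lemma meet_joinr_absorb {d} (L : latticeType d) (p x y : L) :
  x <= p -> (x `|` p) `&` (y `|` p) = p.
Proof. by move=> /join_idPr ->; apply/meet_idPl; exact: leUr. Qed.

Lemma strongly_irreducible_weakly_meet_distributive {d} (L : tbLatticeType d)
    (p : L) :
  strongly_irreducible p -> weakly_meet_distributive p.
Proof.
move=> p_irr x y xy0; have [xp | yp] : x <= p \/ y <= p.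
  by apply: p_irr; rewrite xy0 le0x.
- by rewrite meet_joinr_absorb.
- by rewrite meetC meet_joinr_absorb.
Qed.

Theorem lemma1p10 (d : Order.disp_t) (L : tbLatticeType d) (p : L) :
  complete_lattice L -> strongly_irreducible p -> weakly_meet_distributive p.
Proof. by move=> _; exact: strongly_irreducible_weakly_meet_distributive. Qed.
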